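(* Let $\mathsf S,\mathsf T$ be trees. Every morphism of polynomial endofunctors $\overline{\mathsf S}\to\overline{\mathsf T}$ is a morphism of monads. Equivalently, the forgetful functor $\mathbf{Tree}\to\mathbf{PolyEnd}$ is full.
   Context: A polynomial endofunctor is a diagram of sets $P_0\xleftarrow{s}P_2\xrightarrow{p}P_1\xrightarrow{t}P_0$ with $p$ having finite fibres; a morphism (in $\mathbf{PolyEnd}$) is a triple of maps commuting with $s,p,t$ whose middle square is a pullback. A tree is a polynomial endofunctor with all sets finite, $t$ injective, $s$ injective with singleton complement (the root), and such that iterating $\sigma$ ($\sigma(\mathrm{root})=\mathrm{root}$, $\sigma(e)=t(p(e))$ for $e\in T_2$) brings every edge to the root. A subtree of $\mathsf T$ is a tree with a morphism into $\mathsf T$ whose components are inclusions. For a tree $\mathsf T$, $\overline{\mathsf T}$ is the polynomial monad $T_0\leftarrow\mathrm{sub}'(\mathsf T)\to\mathrm{sub}(\mathsf T)\to T_0$, where $\mathrm{sub}(\mathsf T)$ is the set of subtrees, $\mathrm{sub}'(\mathsf T)$ the set of subtrees with a marked leaf, the maps return the marked leaf, forget the mark, and return the root; multiplication is grafting of subtrees and the unit sends an edge to the trivial subtree on it (this is the free monad on $\mathsf T$). $\mathbf{Tree}$ is the category whose objects are trees and whose morphisms $\mathsf S\to\mathsf T$ are monad morphisms $\overline{\mathsf S}\to\overline{\mathsf T}$ (morphisms of polynomial endofunctors respecting the monad structures). *)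

From Stdlib Require Import ClassicalEpsilon.
From mathcomp Require Import all_boot.
Set Implicit Arguments. Unset Strict Implicit. Unset Printing Implicit Defensive.

(* (Finiteness of the fibres of p is a property of objects; it plays  *)
(*  no role in the statement about morphisms.)          *)
Record PolyEnd := PolyEnd_ {
  P0 : Type; P1 : Type; P2 : Type;
  src : P2 -> P0; proj : P2 -> P1; tgt : P1 -> P0 }.
Arguments src : clear implicits.
Arguments proj : clear implicits.
Arguments tgt : clear implicits.

(* (f0,f1,f2) commutes with s, p, t and the middle square is a pullback:
   b |-> (p b, f2 b) is a bijection P2 -> P1 x_{Q1} Q2. *)
Definition polyend_hom (P Q : PolyEnd)
  (f0 : P0 P -> P0 Q) (f1 : P1 P -> P1 Q) (f2 : P2 P -> P2 Q) : Prop :=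
  [/\ forall b, src Q (f2 b) = f0 (src P b),
      forall b, proj Q (f2 b) = f1 (proj P b),
      forall x, tgt Q (f1 x) = f0 (tgt P x) &
      forall x (b' : P2 Q), proj Q b' = f1 x ->
        exists! b, proj P b = x /\ f2 b = b'].

(* Monad structure on a polynomial endofunctor, given by its components:
   unit Id => P  (eta1 on P1-level, eta2 on P2-level) and multiplication
   P o P => P.  An element of (P o P)_1 is a pair (x, y) with x : P1 and
   y defined on the fibre of x with tgt (y b) = src b; we take y total
   (only its values on the fibre of x matter).  An element of (P o P)_2
   over (x,y) is a pair (b, c) with proj b = x, proj c = y b. *)
Record PolyMonadStr (P : PolyEnd) := PolyMonadStr_ {
  eta1 : P0 P -> P1 P;
  eta2 : P0 P -> P2 P;
  mu1 : P1 P -> (P2 P -> P1 P) -> P1 P;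
  mu2 : P1 P -> (P2 P -> P1 P) -> P2 P -> P2 P -> P2 P }.
Arguments eta1 {P}. Arguments eta2 {P}. Arguments mu1 {P}. Arguments mu2 {P}.

(* The image of (x, y) under f o f is
   (f1 x, y') where y' (f2 b) = f1 (y b) on the fibre of x (the fibre of
   f1 x is exactly f2 of the fibre of x, by the pullback condition). *)
Definition monad_hom (P Q : PolyEnd) (MP : PolyMonadStr P) (MQ : PolyMonadStr Q)
  (f0 : P0 P -> P0 Q) (f1 : P1 P -> P1 Q) (f2 : P2 P -> P2 Q) : Prop :=
  [/\ polyend_hom f0 f1 f2,
      forall e, f1 (eta1 MP e) = eta1 MQ (f0 e),
      forall e, f2 (eta2 MP e) = eta2 MQ (f0 e) &
      forall x (y : P2 P -> P1 P) (y' : P2 Q -> P1 Q),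
        (forall b, proj P b = x -> tgt P (y b) = src P b) ->
        (forall b, proj P b = x -> y' (f2 b) = f1 (y b)) ->
        f1 (mu1 MP x y) = mu1 MQ (f1 x) y' /\
        (forall b c, proj P b = x -> proj P c = y b ->
           f2 (mu2 MP x y b c) = mu2 MQ (f1 x) y' (f2 b) (f2 c))].

(* Trees.  T0 = edges, T1 = nodes, T2 = flags (node, input edge).     *)
Section TreeDefs.
Variables (E N F : finType) (s : F -> E) (p : F -> N) (t : N -> E).

Definition sigma (e : E) : E :=
  if [pick f | s f == e] is Some f then t (p f) else e.

Definition is_tree : Prop :=
  [/\ injective t, injective s &
      exists r, [/\ r \notin codom s,
                    forall e, e \notin codom s -> e = r &
                    forall e, exists n, iter n sigma e = r]].

(* The restriction of (s,p,t) to edges A0 and nodes A1 (flags are forced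
   to be p^-1(A1) since the middle square of the inclusion morphism is a
   pullback) is a well-defined polynomial endofunctor which is a tree. *)
Definition flags_of (A1 : {set N}) : {set F} := p @^-1: A1.

Definition sigma_on (A2 : {set F}) (e : E) : E :=
  if [pick f in A2 | s f == e] is Some f then t (p f) else e.

Definition tree_on (A0 : {set E}) (A1 : {set N}) : Prop :=
  let A2 := flags_of A1 in
  [/\ {in A2, forall f, s f \in A0},
      {in A1, forall n, t n \in A0},
      {in A1 &, injective t},
      {in A2 &, injective s} &
      exists r, [/\ r \in A0, r \notin s @: A2,
                    {in A0, forall e, e \notin s @: A2 -> e = r} &
                    {in A0, forall e, exists n, iter n (sigma_on A2) e = r}]].

Lemma tree_on_root_ex A0 A1 : tree_on A0 A1 ->
  exists r, (r \in A0) && (r \notin s @: flags_of A1).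
Proof. by case=> _ _ _ _ [r [H1 H2 _ _]]; exists r; rewrite H1 H2. Qed.

Lemma tree_on_trivial e : tree_on [set e] set0.
Proof.
rewrite /tree_on /flags_of preimset0; split.
- by move=> f; rewrite in_set0.
- by move=> n; rewrite in_set0.
- by move=> n1 n2; rewrite in_set0.
- by move=> f1 f2; rewrite in_set0.
exists e; split; first by rewrite set11.
- by rewrite imset0 in_set0.
- by move=> e' /set1P.
- by move=> e' /set1P ->; exists 0.
Qed.

End TreeDefs.

Record tree := Tree {
  edge : finType; node : finType; flag : finType;
  tsrc : flag -> edge; tproj : flag -> node; ttgt : node -> edge;
  tree_ax : is_tree tsrc tproj ttgt }.
Arguments tsrc : clear implicits.
Arguments tproj : clear implicits.
Arguments ttgt : clear implicits.

Section Tbar.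
Variable T : tree.
Local Notation E := (edge T).
Local Notation N := (node T).

Definition subtree := {A : {set E} * {set N} | tree_on (tsrc T) (tproj T) (ttgt T) A.1 A.2}.

Definition sub_edges (x : subtree) := (sval x).1.
Definition sub_nodes (x : subtree) := (sval x).2.

Definition sub_root (x : subtree) : E := xchoose (tree_on_root_ex (proj2_sig x)).

Definition is_leaf (x : subtree) (e : E) : bool :=
  (e \in sub_edges x) && (e \notin ttgt T @: sub_nodes x).

Definition msubtree := {xe : subtree * E | is_leaf xe.1 xe.2}.

Definition Tbar_poly : PolyEnd :=
  @PolyEnd_ E subtree msubtree (fun b => (sval b).2) (fun b => (sval b).1) sub_root.

Definition Tbar_eta1 (e : E) : subtree :=
  exist _ ([set e], set0) (tree_on_trivial (tsrc T) (tproj T) (ttgt T) e).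

Lemma Tbar_eta_leaf e : is_leaf (Tbar_eta1 e) e.
Proof. by rewrite /is_leaf /sub_edges /sub_nodes /= set11 imset0 in_set0. Qed.

Definition Tbar_eta2 (e : E) : msubtree := exist _ (Tbar_eta1 e, e) (Tbar_eta_leaf e).

Definition mark (x : subtree) (e : E) : option msubtree :=
  match boolP (is_leaf x e) with
  | AltTrue H => Some (exist _ (x, e) H)
  | AltFalse _ => None
  end.

Definition graft_sets (x : subtree) (y : msubtree -> subtree) : {set E} * {set N} :=
  let yl e := if mark x e is Some b then y b else x in
  (sub_edges x :|: \bigcup_(e | is_leaf x e) sub_edges (yl e),
   sub_nodes x :|: \bigcup_(e | is_leaf x e) sub_nodes (yl e)).

Definition Tbar_mu1 (x : subtree) (y : msubtree -> subtree) : subtree :=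
  match excluded_middle_informative
          (tree_on (tsrc T) (tproj T) (ttgt T) (graft_sets x y).1 (graft_sets x y).2) with
  | left H => exist _ (graft_sets x y) H
  | right _ => x
  end.

(* the leaf (y b, m) of the grafted piece becomes the leaf m of the graft *)
Definition Tbar_mu2 (x : subtree) (y : msubtree -> subtree) (b c : msubtree) : msubtree :=
  if mark (Tbar_mu1 x y) (sval c).2 is Some d then d else c.

Definition Tbar_monad : PolyMonadStr Tbar_poly :=
  @PolyMonadStr_ Tbar_poly Tbar_eta1 Tbar_eta2 Tbar_mu1 Tbar_mu2.

End Tbar.

(* The proof rests on one rigidity fact: a subtree of a tree is determined by
   its root together with its set of leaves (Lemma [subtree_eq]).
   Both sides of each unit and multiplication law are therefore subtrees with
   equal roots and equal leaves, hence equal. *)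
From Stdlib Require Import ClassicalEpsilon ProofIrrelevance.
From mathcomp Require Import all_boot.
Set Implicit Arguments. Unset Strict Implicit. Unset Printing Implicit Defensive.

Section Subtrees.
Variable T : tree.
Local Notation E := (edge T).
Local Notation N := (node T).
Local Notation F := (flag T).
Local Notation s := (tsrc T).
Local Notation p := (tproj T).
Local Notation t := (ttgt T).
Local Notation sig := (sigma s p t).
Local Notation sigA A := (sigma_on s p t A).
Local Notation fl A := (flags_of p A).

Lemma t_inj : injective t. Proof. by case: (tree_ax T). Qed.
Lemma s_inj : injective s. Proof. by case: (tree_ax T). Qed.

Lemma in_flags (A : {set N}) f : (f \in fl A) = (p f \in A).
Proof. by rewrite inE. Qed.

Lemma fl_imsetS (A B : {set N}) : A \subset B -> s @: fl A \subset s @: fl B.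
Proof. by move=> AB; apply/imsetS/preimsetS. Qed.

Lemma sigma_s f : sig (s f) = t (p f).
Proof.
rewrite /sigma; case: pickP => [g /eqP /s_inj -> // | /(_ f)]; by rewrite eqxx.
Qed.

Lemma sigma_on_s (A : {set F}) f : f \in A -> sigA A (s f) = t (p f).
Proof.
move=> fA; rewrite /sigma_on; case: pickP => [g /andP[_ /eqP /s_inj ->] // | /(_ f)].
by rewrite fA eqxx.
Qed.

Lemma iter_sigma_on (A : {set F}) k e :
  (forall m, m < k -> iter m sig e \in s @: A) -> iter k (sigA A) e = iter k sig e.
Proof.
elim: k => [//|k IH] H; rewrite !iterS IH; last by move=> m mk; apply/H/ltnW.
by case/imsetP: (H k (ltnSn k)) => f fA ->; rewrite sigma_on_s // sigma_s.
Qed.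

(* sigma has no cycle through an input edge: all edges flow to the root,
   which is fixed by sigma. *)
Lemma sigma_acyclic f c : 0 < c -> iter c sig (s f) <> s f.
Proof.
move=> c0 ce; case: (tree_ax T) => _ _ [R [HR _ toR]].
have fixR n : iter n sig R = R.
  elim: n => // n IH; rewrite iterS IH /sigma; case: pickP => [g /eqP gR|//].
  by rewrite -gR codom_f in HR.
have cyc m : iter (c * m) sig (s f) = s f.
  by elim: m => [|m IH]; rewrite ?muln0 // mulnS iterD IH ce.
case: (toR (s f)) => j ej.
have : iter (c * j) sig (s f) = R.
  by rewrite -(subnK (leq_pmull j c0)) iterD ej fixR.
by rewrite cyc => eR; rewrite -eR codom_f in HR.
Qed.

(* [tree_on] with an explicit root and without the injectivity clauses,
   which hold automatically inside a tree. *)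
Record rooted_on (A0 : {set E}) (A1 : {set N}) (r : E) : Prop := RootedOn {
  ro_src : {in fl A1, forall f, s f \in A0};
  ro_tgt : {in A1, forall n, t n \in A0};
  ro_root : r \in A0;
  ro_root_free : r \notin s @: fl A1;
  ro_root_uniq : {in A0, forall e, e \notin s @: fl A1 -> e = r};
  ro_reach : {in A0, forall e, exists n, iter n (sigA (fl A1)) e = r} }.

Lemma rooted_on_tree_on A0 A1 r : rooted_on A0 A1 r -> tree_on s p t A0 A1.
Proof.
case=> H1 H2 H3 H4 H5 H6; split => //.
- by move=> a b _ _ /t_inj.
- by move=> a b _ _ /s_inj.
by exists r; split.
Qed.

Lemma subtree_rooted (a : subtree T) : rooted_on (sub_edges a) (sub_nodes a) (sub_root a).
Proof.
have [H1 H2 _ _ [r [H3 H4 H5 H6]]] := proj2_sig a.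
have := xchooseP (tree_on_root_ex (proj2_sig a)); rewrite -/(sub_root a) => /andP[R1 R2].
by rewrite (H5 _ R1 R2); split.
Qed.

Lemma sub_root_uniq (a : subtree T) e :
  e \in sub_edges a -> e \notin s @: fl (sub_nodes a) -> sub_root a = e.
Proof. by move=> H1 H2; rewrite (ro_root_uniq (subtree_rooted a) H1 H2). Qed.

Record sigma_path (A0 : {set E}) (A1 : {set N}) (r e : E) (k : nat) : Prop := SigmaPath {
  sp_end : iter k sig e = r;
  sp_in : forall m, m <= k -> iter m sig e \in A0;
  sp_out : forall m, 0 < m <= k -> iter m sig e \in t @: A1;
  sp_early : forall m, m < k -> iter m sig e != r }.

Lemma sigma_path_ex A0 A1 r e :
  rooted_on A0 A1 r -> e \in A0 -> exists k, sigma_path A0 A1 r e k.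
Proof.
move=> Hr eA; case: (ro_reach Hr eA) => k; elim: k e eA => [|k IH] e eA.
  by rewrite /= => <-; exists 0; split => //; case.
rewrite iterSr; case: (eqVneq e r) => [-> _ | ner].
  by exists 0; split => //; [case => [_|//]; exact: (ro_root Hr) | case].
case: (boolP (e \in s @: fl A1)) => [eS | /(ro_root_uniq Hr eA) er].
  2: by rewrite er eqxx in ner.
case/imsetP: eS => f fA ef; subst e; rewrite sigma_on_s // => Hk.
have e1A : t (p f) \in A0 by apply: (ro_tgt Hr); rewrite -in_flags.
case: (IH _ e1A Hk) => k1 [P1 P2 P3 P4]; exists k1.+1; split.
- by rewrite iterSr sigma_s.
- by case=> [|m] Hm; rewrite ?iterSr ?sigma_s; [exact: eA | apply: P2].
- case=> [|[|m]] // Hm; rewrite iterSr sigma_s; last exact: P3.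
  by rewrite /= imset_f // -in_flags.
- by case=> [|m] Hm; rewrite ?iterSr ?sigma_s; [exact: ner | apply: P4].
Qed.

Lemma sigma_path_src A0 A1 r e k m : rooted_on A0 A1 r -> sigma_path A0 A1 r e k ->
  m < k -> iter m sig e \in s @: fl A1.
Proof.
move=> Hr [_ P2 _ P4] mk; apply: contraR (P4 _ mk) => H.
by rewrite (ro_root_uniq Hr (P2 _ (ltnW mk)) H) eqxx.
Qed.

(* Half of [subtree_eq]: following sigma-paths from the common root, every
   edge and node of a belongs to b, since an output of a node of a that is
   an edge of b is not a leaf of a, hence not of b. *)
Lemma subtree_sub (a b : subtree T) : sub_root a = sub_root b ->
  (forall e, is_leaf a e = is_leaf b e) ->
  sub_edges a \subset sub_edges b /\ sub_nodes a \subset sub_nodes b.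
Proof.
move=> rab lab; have HA := subtree_rooted a; have HB := subtree_rooted b.
have inner e : e \in sub_edges a -> e \in sub_edges b ->
    e \in t @: sub_nodes a -> e \in t @: sub_nodes b.
  move=> eA eB eT; have : ~~ is_leaf b e by rewrite -lab /is_leaf eA eT.
  by rewrite /is_leaf eB /= negbK.
have edges k e : e \in sub_edges a ->
    iter k (sigA (fl (sub_nodes a))) e = sub_root a -> e \in sub_edges b.
  elim: k e => [|k IH] e eA.
    by rewrite /= => ->; rewrite rab; exact: (ro_root HB).
  rewrite iterSr; case: (boolP (e \in s @: fl (sub_nodes a))) => [/imsetP[f fA ->] | ens].
    rewrite sigma_on_s // => /IH.
    have e1A : t (p f) \in sub_edges a by apply: (ro_tgt HA); rewrite -in_flags.
    move/(_ e1A) => e1B.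
    have : t (p f) \in t @: sub_nodes b by apply: inner => //; rewrite imset_f // -in_flags.
    case/imsetP => m mB /t_inj pm; apply: (ro_src HB); by rewrite in_flags pm.
  by move=> _; rewrite (ro_root_uniq HA eA ens) rab; exact: (ro_root HB).
have edgesS : sub_edges a \subset sub_edges b.
  by apply/subsetP => e eA; case: (ro_reach HA eA) => k; apply: edges.
split => //; apply/subsetP => n nA.
have tA : t n \in sub_edges a by exact: (ro_tgt HA).
have : t n \in t @: sub_nodes b.
  by apply: inner => //; [exact: (subsetP edgesS) | exact: imset_f].
by case/imsetP => m mB /t_inj ->.
Qed.

Lemma subtree_eq (a b : subtree T) : sub_root a = sub_root b ->
  (forall e, is_leaf a e = is_leaf b e) -> a = b.
Proof.
move=> rab lab; have [H1 H2] := subtree_sub rab lab.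
have [H3 H4] := subtree_sub (esym rab) (fun e => esym (lab e)).
move: H1 H2 H3 H4; case: a {rab lab} => [[A0 A1] Ha]; case: b => [[B0 B1] Hb].
rewrite /sub_edges /sub_nodes /= => H1 H2 H3 H4.
have e0 : A0 = B0 by apply/eqP; rewrite eqEsubset H1 H3.
have e1 : A1 = B1 by apply/eqP; rewrite eqEsubset H2 H4.
by subst; f_equal; apply: proof_irrelevance.
Qed.

Lemma msubtree_eq (b c : msubtree T) : sval b = sval c -> b = c.
Proof. by case: b c => [bv bH] [cv cH] /= e; subst; f_equal; apply: bool_irrelevance. Qed.

Lemma mark_some (x : subtree T) e :
  is_leaf x e -> exists2 d, mark x e = Some d & sval d = (x, e).
Proof.
move=> H; rewrite /mark; case: {-}_ / (boolP (is_leaf x e)) => [H'|]; last by rewrite H.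
by exists (exist _ (x, e) H').
Qed.

Lemma sub_root_eta e : sub_root (@Tbar_eta1 T e) = e.
Proof.
apply: sub_root_uniq; first by rewrite /sub_edges /= set11.
by rewrite /sub_nodes /= /flags_of preimset0 imset0 in_set0.
Qed.

Lemma is_leaf_eta e e' : is_leaf (@Tbar_eta1 T e) e' = (e' == e).
Proof. by rewrite /is_leaf /sub_edges /sub_nodes /= imset0 in_set0 andbT inE. Qed.

Section Grafting.
Variables (x : subtree T) (yl : E -> subtree T).
Hypothesis yl_root : forall l, is_leaf x l -> sub_root (yl l) = l.

Local Notation X0 := (sub_edges x).
Local Notation X1 := (sub_nodes x).
Local Notation r := (sub_root x).
Local Notation Y0 l := (sub_edges (yl l)).
Local Notation Y1 l := (sub_nodes (yl l)).

Definition graft_edges := X0 :|: \bigcup_(l | is_leaf x l) Y0 l.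
Definition graft_nodes := X1 :|: \bigcup_(l | is_leaf x l) Y1 l.
Local Notation G0 := graft_edges.
Local Notation G1 := graft_nodes.

Let HX := subtree_rooted x.
Let HY l : is_leaf x l -> rooted_on (Y0 l) (Y1 l) l.
Proof. by move=> H; rewrite -{3}(yl_root H); exact: subtree_rooted. Qed.

Let G1X : X1 \subset G1. Proof. exact: subsetUl. Qed.
Let G1Y l : is_leaf x l -> Y1 l \subset G1.
Proof. by move=> H; apply: subset_trans (subsetUr _ _); apply: (bigcup_sup l). Qed.
Let G0Y l e : is_leaf x l -> e \in Y0 l -> e \in G0.
Proof. by move=> H eY; rewrite in_setU; apply/orP; right; apply/bigcupP; exists l. Qed.

Let memG0 e : e \in G0 -> e \in X0 \/ exists2 l, is_leaf x l & e \in Y0 l.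
Proof. by rewrite in_setU => /orP[|/bigcupP[l Hl eY]]; [left | right; exists l]. Qed.
Let memG1 n : n \in G1 -> n \in X1 \/ exists2 l, is_leaf x l & n \in Y1 l.
Proof. by rewrite in_setU => /orP[|/bigcupP[l Hl eY]]; [left | right; exists l]. Qed.

(* The root of x is not an input of a grafted piece: otherwise sigma would
   lead from the root of x to the leaf l and back, a cycle. *)
Lemma root_not_in_piece l : is_leaf x l -> r \notin s @: fl (Y1 l).
Proof.
move=> Hl; have HYl := HY Hl; apply/negP; case/imsetP => f fY rf.
have rY : r \in Y0 l by rewrite rf; apply: (ro_src HYl).
have [k [k1 _ _ _]] := sigma_path_ex HYl rY.
have kpos : 0 < k.
  case: k k1 => // /= rl.
  by have := ro_root_free HYl; rewrite -{1}rl rf imset_f.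
have lX : l \in X0 by case/andP: Hl.
have [a [a1 _ _ _]] := sigma_path_ex HX lX.
apply: (@sigma_acyclic f (a + k)); first by rewrite addn_gt0 kpos orbT.
by rewrite iterD -rf k1 a1.
Qed.

(* A grafted piece meets x only in the leaf it is grafted on: the sigma-path
   of a common edge reaches this leaf within x (forcing it to be the edge
   itself) unless it first reaches the root of x inside the piece. *)
Lemma piece_meets_base l e : is_leaf x l -> e \in Y0 l -> e \in X0 -> e = l.
Proof.
move=> Hl eY eX; have [k Pk] := sigma_path_ex (HY Hl) eY.
have [a Pa] := sigma_path_ex HX eX.
case: (leqP k a) => ka.
  case: k ka Pk => [|k] ka Pk; first by rewrite -(sp_end Pk).
  have : l \in t @: X1 by rewrite -(sp_end Pk); apply: (sp_out Pa); rewrite ka.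
  by case/andP: Hl => _ /negP.
have := sigma_path_src (HY Hl) Pk ka.
by rewrite (sp_end Pa) (negbTE (root_not_in_piece Hl)).
Qed.

Lemma leaf_not_in_piece l l' : is_leaf x l -> is_leaf x l' -> l \notin s @: fl (Y1 l').
Proof.
move=> Hl Hl'; apply/negP => /imsetP[f fY lf].
have lY : l \in Y0 l' by rewrite lf; apply: (ro_src (HY Hl')).
have ll' : l = l' by apply: (piece_meets_base Hl' lY); case/andP: Hl.
by have := ro_root_free (HY Hl'); rewrite -{1}ll' lf imset_f.
Qed.

Lemma pieces_disjoint l l' e :
  is_leaf x l -> is_leaf x l' -> e \in Y0 l -> e \in Y0 l' -> l = l'.
Proof.
move=> Hl Hl' eY eY'.
have [k Pk] := sigma_path_ex (HY Hl) eY; have [k' Pk'] := sigma_path_ex (HY Hl') eY'.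
case: (ltngtP k k') => kk; last by rewrite -(sp_end Pk) -(sp_end Pk') kk.
- have := sigma_path_src (HY Hl') Pk' kk.
  by rewrite (sp_end Pk) (negbTE (leaf_not_in_piece Hl Hl')).
- have := sigma_path_src (HY Hl) Pk kk.
  by rewrite (sp_end Pk') (negbTE (leaf_not_in_piece Hl' Hl)).
Qed.

Lemma graft_rooted : rooted_on G0 G1 r.
Proof.
have rG : r \notin s @: fl G1.
  apply/negP; case/imsetP => f; rewrite in_flags => /memG1[fX | [l Hl fY]] rf.
    by have := ro_root_free HX; rewrite rf imset_f // in_flags.
  by have := root_not_in_piece Hl; rewrite rf imset_f // in_flags.
have XG e : e \in X0 -> e \in G0 by move=> eX; rewrite in_setU eX.
have pathG A0 A1 r' e k : rooted_on A0 A1 r' -> sigma_path A0 A1 r' e k ->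
    A1 \subset G1 -> iter k (sigA (fl G1)) e = r'.
  move=> Hr Pk AG; rewrite iter_sigma_on ?(sp_end Pk) // => m mk.
  exact/(subsetP (fl_imsetS AG))/(sigma_path_src Hr Pk mk).
have Xreach e : e \in X0 -> exists n, iter n (sigA (fl G1)) e = r.
  by move=> eX; case: (sigma_path_ex HX eX) => k Pk; exists k; exact: pathG HX Pk G1X.
split.
- move=> f; rewrite in_flags => /memG1[fX | [l Hl fY]].
    by apply: XG; apply: (ro_src HX); rewrite in_flags.
  by apply: (G0Y Hl); apply: (ro_src (HY Hl)); rewrite in_flags.
- move=> n /memG1[nX | [l Hl nY]]; first by apply: XG; apply: (ro_tgt HX).
  by apply: (G0Y Hl); apply: (ro_tgt (HY Hl)).
- by apply: XG; exact: (ro_root HX).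
- exact: rG.
- move=> e /memG0[eX | [l Hl eY]] eG.
    by apply: (ro_root_uniq HX eX); apply: contra eG; exact: (subsetP (fl_imsetS G1X)).
  have el : e = l.
    by apply: (ro_root_uniq (HY Hl) eY); apply: contra eG; exact: (subsetP (fl_imsetS (G1Y Hl))).
  subst e.
  have lX : l \in X0 by case/andP: Hl.
  by apply: (ro_root_uniq HX lX); apply: contra eG; exact: (subsetP (fl_imsetS G1X)).
- move=> e /memG0[eX | [l Hl eY]]; first exact: Xreach.
  have lX : l \in X0 by case/andP: Hl.
  case: (sigma_path_ex (HY Hl) eY) => k Pk; case: (Xreach _ lX) => a Ha.
  by exists (a + k); rewrite iterD (pathG _ _ _ _ _ (HY Hl) Pk (G1Y Hl)).
Qed.

Lemma graft_leaf e : (e \in G0) && (e \notin t @: G1) <->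
  exists2 l, is_leaf x l & is_leaf (yl l) e.
Proof.
split.
  case/andP => /memG0[eX | [l Hl eY]] eT.
    have eL : is_leaf x e.
      by rewrite /is_leaf eX; apply: contra eT; exact: (subsetP (imsetS _ G1X)).
    exists e => //; rewrite /is_leaf (ro_root (HY eL)).
    by apply: contra eT; exact: (subsetP (imsetS _ (G1Y eL))).
  exists l => //; rewrite /is_leaf eY.
  by apply: contra eT; exact: (subsetP (imsetS _ (G1Y Hl))).
case=> l Hl /andP[eY eT]; rewrite (G0Y Hl eY) /=.
apply/negP; case/imsetP => n /memG1[nX | [l' Hl' nY]] en.
  have el : e = l by apply: piece_meets_base => //; rewrite en; apply: (ro_tgt HX).
  by case/andP: Hl => _ /negP; apply; rewrite -el en imset_f.
have eY' : e \in Y0 l' by rewrite en; apply: (ro_tgt (HY Hl')).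
have ll' := pieces_disjoint Hl Hl' eY eY'; subst l'.
by move/negP: eT; apply; rewrite en imset_f.
Qed.

End Grafting.

Definition graft_piece (x : subtree T) (y : msubtree T -> subtree T) (e : E) :=
  if mark x e is Some b then y b else x.

Lemma Tbar_mu1_spec (x : subtree T) (y : msubtree T -> subtree T) :
  (forall l, is_leaf x l -> sub_root (graft_piece x y l) = l) ->
  sub_root (Tbar_mu1 x y) = sub_root x /\
  forall e, is_leaf (Tbar_mu1 x y) e <->
    exists2 l, is_leaf x l & is_leaf (graft_piece x y l) e.
Proof.
move=> Hy; have HG := graft_rooted Hy.
have val : sval (Tbar_mu1 x y) =
    (graft_edges x (graft_piece x y), graft_nodes x (graft_piece x y)).
  rewrite /Tbar_mu1; case: excluded_middle_informative => [//|n].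
  by case: (n (rooted_on_tree_on HG)).
split.
  apply: sub_root_uniq; rewrite /sub_edges /sub_nodes val /=.
  - exact: (ro_root HG).
  - exact: (ro_root_free HG).
by move=> e; rewrite /is_leaf /sub_edges /sub_nodes val /=; exact: graft_leaf.
Qed.

End Subtrees.

Section PolyendMorphism.
Variables (S T : tree) (f0 : edge S -> edge T)
  (f1 : subtree S -> subtree T) (f2 : msubtree S -> msubtree T).
Hypothesis hom : polyend_hom (P := Tbar_poly S) (Q := Tbar_poly T) f0 f1 f2.

Let hom_src b : (sval (f2 b)).2 = f0 (sval b).2. Proof. by have [hs _ _ _] := hom; apply: hs. Qed.
Let hom_proj b : (sval (f2 b)).1 = f1 (sval b).1. Proof. by have [_ hp _ _] := hom; apply: hp. Qed.

Lemma hom_root x : sub_root (f1 x) = f0 (sub_root x).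
Proof. by have [_ _ ht _] := hom; apply: ht. Qed.

Lemma hom_msubtree b : sval (f2 b) = (f1 (sval b).1, f0 (sval b).2).
Proof. by rewrite [sval (f2 b)]surjective_pairing hom_proj hom_src. Qed.

(* By the pullback condition, the leaves of f1 x are the images of the
   leaves of x. *)
Lemma leaf_image x e' : is_leaf (f1 x) e' <-> exists2 l, is_leaf x l & e' = f0 l.
Proof.
split.
  move=> H; have [_ _ _ hpb] := hom; simpl in hpb.
  case: (hpb x (exist _ (f1 x, e') H) erefl) => b [[bx fb] _].
  exists (sval b).2; first by have := proj2_sig b; rewrite bx.
  by rewrite -hom_src fb.
case=> l Hl ->; have := proj2_sig (f2 (exist _ (x, l) Hl)).
by rewrite hom_msubtree.
Qed.

Lemma hom_eta1 e : f1 (@Tbar_eta1 S e) = @Tbar_eta1 T (f0 e).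
Proof.
apply: subtree_eq; first by rewrite hom_root !sub_root_eta.
move=> e'; rewrite is_leaf_eta; apply/idP/eqP.
  by case/leaf_image => l; rewrite is_leaf_eta => /eqP ->.
by move=> ->; apply/leaf_image; exists e; rewrite ?is_leaf_eta.
Qed.

Lemma hom_eta2 e : f2 (@Tbar_eta2 S e) = @Tbar_eta2 T (f0 e).
Proof. by apply: msubtree_eq; rewrite hom_msubtree /= hom_eta1. Qed.

Section Multiplication.
Variables (x : subtree S) (y : msubtree S -> subtree S) (y' : msubtree T -> subtree T).
Hypothesis y_root : forall b, (sval b).1 = x -> sub_root (y b) = (sval b).2.
Hypothesis y'_image : forall b, (sval b).1 = x -> y' (f2 b) = f1 (y b).

Let piece_at l : is_leaf x l -> exists2 d, graft_piece x y l = y d & sval d = (x, l).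
Proof. by move=> Hl; case: (mark_some Hl) => d md dv; exists d; rewrite /graft_piece ?md. Qed.

Let piece_root l : is_leaf x l -> sub_root (graft_piece x y l) = l.
Proof. by move=> Hl; case: (piece_at Hl) => d -> dv; rewrite y_root dv. Qed.

Lemma hom_graft_piece l : is_leaf x l -> graft_piece (f1 x) y' (f0 l) = f1 (graft_piece x y l).
Proof.
move=> Hl; case: (piece_at Hl) => d -> dv.
have Hf : is_leaf (f1 x) (f0 l) by apply/leaf_image; exists l.
case: (mark_some Hf) => d' md' d'v; rewrite /graft_piece md'.
have -> : d' = f2 d by apply: msubtree_eq; rewrite d'v hom_msubtree dv.
by apply: y'_image; rewrite dv.
Qed.

Let piece_root' l' : is_leaf (f1 x) l' -> sub_root (graft_piece (f1 x) y' l') = l'.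
Proof. by case/leaf_image => l Hl ->; rewrite hom_graft_piece // hom_root piece_root. Qed.

Lemma hom_mu1 : f1 (Tbar_mu1 x y) = Tbar_mu1 (f1 x) y'.
Proof.
have [rS lS] := Tbar_mu1_spec piece_root; have [rT lT] := Tbar_mu1_spec piece_root'.
apply: subtree_eq; first by rewrite hom_root rS rT hom_root.
move=> e'; apply/idP/idP.
  case/leaf_image => e /lS [l Hl He] ->; apply/lT; exists (f0 l).
    by apply/leaf_image; exists l.
  by rewrite hom_graft_piece //; apply/leaf_image; exists e.
case/lT => l' /leaf_image [l Hl ->]; rewrite hom_graft_piece // => /leaf_image [e He ->].
by apply/leaf_image; exists e => //; apply/lS; exists l.
Qed.

(* mu2 marks, in the graft, the leaf marked in the piece; both sides mark the
   image of that leaf in the same subtree by [hom_mu1]. *)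
Lemma hom_mu2 b c : (sval b).1 = x -> (sval c).1 = y b ->
  f2 (Tbar_mu2 x y b c) = Tbar_mu2 (f1 x) y' (f2 b) (f2 c).
Proof.
move=> bx cy; have [_ lS] := Tbar_mu1_spec piece_root.
have Lb : is_leaf x (sval b).2 by have := proj2_sig b; rewrite bx.
have lc : is_leaf (Tbar_mu1 x y) (sval c).2.
  apply/lS; exists (sval b).2 => //; case: (piece_at Lb) => d -> dv.
  have -> : d = b by apply: msubtree_eq; rewrite dv -bx -surjective_pairing.
  by have := proj2_sig c; rewrite cy.
case: (mark_some lc) => d md dv.
have lc' : is_leaf (Tbar_mu1 (f1 x) y') (sval (f2 c)).2.
  by rewrite -hom_mu1 hom_src; apply/leaf_image; exists (sval c).2.
case: (mark_some lc') => d' md' d'v.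
rewrite /Tbar_mu2 md md'; apply: msubtree_eq.
by rewrite hom_msubtree dv d'v /= hom_mu1 hom_src.
Qed.

End Multiplication.
End PolyendMorphism.

Theorem mainTheorem11 (S T : tree)
  (f0 : P0 (Tbar_poly S) -> P0 (Tbar_poly T))
  (f1 : P1 (Tbar_poly S) -> P1 (Tbar_poly T))
  (f2 : P2 (Tbar_poly S) -> P2 (Tbar_poly T)) :
  polyend_hom f0 f1 f2 ->
  monad_hom (Tbar_monad S) (Tbar_monad T) f0 f1 f2.
Proof.
move=> hom; split => //=; [exact: hom_eta1 hom | exact: hom_eta2 hom |].
move=> x y y' y_root y'_image; split; first by apply: (hom_mu1 hom y_root y'_image).
by move=> b c; apply: (hom_mu2 hom y_root y'_image).
Qed.
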